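(* Let $n\ge3$ and let $\mathcal T$ be an admissible family of arcs with endpoints in $[n]$ consisting of exactly $n-1$ arcs (equivalently, a set of $n-1$ facets of $W_n$ with nonempty intersection). Then the vectors $\{e_i-e_j:[i,j)\in\mathcal T\}$ form a $\mathbb{Z}$-basis of the type A root lattice $\Lambda_n=\{x\in\mathbb{Z}^n:\sum_i x_i=0\}$. Consequently $(W_n,\phi_n)$ is a combinatorial quasitoric pair.
   Context: Identify $[n]$ with the vertices of a regular $n$-gon in $S^1$, labelled counterclockwise, with counterclockwise order $\preceq$; for $a\ne b\in[n]$, $[a,b)=\{z\in S^1:a\preceq z\prec b\}$. A finite collection of such arcs is admissible if any two distinct members $I,J$ are either intersecting and strictly nested, or disjoint with the sink of neither equal to the source of the other. Admissible families of arcs correspond to faces of the $(n-1)$-dimensional cyclohedron $W_n$, single arcs to facets. $\phi_n$ assigns to the facet $[i,j)$ the vector $e_i-e_j$. A combinatorial quasitoric pair $(P,\phi)$ consists of a simple $(n-1)$-polytope $P$ and an assignment of lattice vectors in $\mathbb{Z}^{n-1}$ to facets such that the vectors of any $n-1$ facets meeting in a vertex form a lattice basis. *)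

From HB Require Import structures.
From mathcomp Require Import all_boot all_order all_algebra.
Set Implicit Arguments. Unset Strict Implicit. Unset Printing Implicit Defensive.
Import Order.TTheory GRing.Theory Num.Theory.

(* Vertices of the regular n-gon: 'I_n, labelled counterclockwise.
   An arc [a,b) (a <> b) is encoded by the pair (a,b) : 'I_n * 'I_n.
   As a subset of S^1, [a,b) is the union of the half-open edges
   [k,k+1) (k : 'I_n, indices mod n) for k running counterclockwise from
   a up to b-1.  Since all arcs are unions of such edges, inclusion /
   intersection of arcs as subsets of S^1 coincide with inclusion /
   intersection of their sets of edges, given by [arc_set]. *)

Definition is_arc (n : nat) (p : 'I_n * 'I_n) : bool := p.1 != p.2.

Definition ccw_offset (n : nat) (a z : 'I_n) : nat := ((z + n) - a) %% n.

Definition arc_set (n : nat) (p : 'I_n * 'I_n) : {set 'I_n} :=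
  [set k : 'I_n | ccw_offset p.1 k < ccw_offset p.1 p.2].

Definition source (n : nat) (p : 'I_n * 'I_n) : 'I_n := p.1.
Definition sink (n : nat) (p : 'I_n * 'I_n) : 'I_n := p.2.

Definition compatible_arcs (n : nat) (p q : 'I_n * 'I_n) : bool :=
  ((arc_set p :&: arc_set q != set0) &&
     ((arc_set p \proper arc_set q) || (arc_set q \proper arc_set p)))
  || ([disjoint arc_set p & arc_set q] &&
      (sink p != source q) && (sink q != source p)).

Definition admissible (n : nat) (T : {set 'I_n * 'I_n}) : bool :=
  [forall p in T, is_arc p] &&
  [forall p in T, forall q in T, (p != q) ==> compatible_arcs p q].

Definition e_vec (n : nat) (i : 'I_n) : 'rV[int]_n := delta_mx ord0 i.

Definition arc_vec (n : nat) (p : 'I_n * 'I_n) : 'rV[int]_n :=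
  (e_vec p.1 - e_vec p.2)%R.

Definition in_Lambda (n : nat) (x : 'rV[int]_n) : bool :=
  (\sum_(i < n) x ord0 i == 0)%R.

Definition is_Z_basis_of_Lambda (n : nat) (T : {set 'I_n * 'I_n})
    (v : 'I_n * 'I_n -> 'rV[int]_n) : Prop :=
  [/\ (forall p, p \in T -> in_Lambda (v p)),
      (forall c : 'I_n * 'I_n -> int,
          (\sum_(p in T) c p *: v p = 0)%R -> forall p, p \in T -> c p = 0%R)
    & (forall x : 'rV[int]_n, in_Lambda x ->
          exists c : 'I_n * 'I_n -> int, x = (\sum_(p in T) c p *: v p)%R)].

From HB Require Import structures.
From mathcomp Require Import all_boot all_order all_algebra zify.
Set Implicit Arguments. Unset Strict Implicit. Unset Printing Implicit Defensive.
Import GRing.Theory.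

(* Write the edge [k, k+1) of the n-gon as k.  Every arc [p] of [T] has a
   private edge, lying in [p] but in no arc of [T] strictly inside [p], and some
   free edge lies in no arc of [T]; laminarity makes the private edges pairwise
   distinct, so for [#|T| = n - 1] they are exactly the edges other than the free
   one.  The coordinate [k] of [sum_p c_p (e_(source p) - e_(sink p))] is
   [W c k - W c (k - 1)], where [W c k] sums the [c_p] over the arcs containing
   the edge [k].  This discrete derivative maps the weightings vanishing on the
   free edge bijectively onto the root lattice, and [c] is recovered from the
   values [W c (private p) = c_p + sum of the c_q over the arcs q strictly
   containing p] by unitriangular back substitution. *)

Lemma cardsC_proper (V : finType) (A B : {set V}) : A \proper B -> #|~: B| < #|~: A|.
Proof. by rewrite -properC => /proper_card. Qed.

Lemma in_Lambda_arc_vec n (p : 'I_n * 'I_n) : in_Lambda (arc_vec p).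
Proof.
have sum_delta (a : 'I_n) : (\sum_(i < n) ((i == a)%:R : int))%R = 1%R.
  by rewrite (bigD1 a) //= eqxx big1 ?addr0 // => i /negbTE ->.
rewrite /in_Lambda (eq_bigr (fun i => ((i == p.1)%:R - (i == p.2)%:R : int)%R)).
  by rewrite sumrB !sum_delta subrr.
by move=> i _; rewrite /arc_vec /e_vec !mxE eqxx.
Qed.

Section CyclicOrder.
Variable n : nat.
Implicit Types (a k z : 'I_n.+1) (p : 'I_n.+1 * 'I_n.+1).

Lemma ord_predE k : ord_pred k = (if k == 0 :> nat then n else k.-1) :> nat.
Proof.
rewrite /=; case: eqP => [->|/eqP k0]; first by rewrite modn_small.
have -> : (k + n.+1).-1 = k.-1 + n.+1 by lia.
by rewrite modnDr modn_small // (leq_ltn_trans (leq_pred k)).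
Qed.

Lemma ccw_offsetE a z : ccw_offset a z = if a <= z then z - a else z + n.+1 - a.
Proof.
rewrite /ccw_offset; case: leqP => az.
  have -> : z + n.+1 - a = (z - a) + n.+1 by lia.
  by rewrite modnDr modn_small //; have := ltn_ord z; lia.
by rewrite modn_small //; have := ltn_ord z; lia.
Qed.

Lemma ccw_offset_lt a z : ccw_offset a z < n.+1.
Proof. by rewrite ccw_offsetE; have := ltn_ord z; have := ltn_ord a; case: (leqP a z); lia. Qed.

Lemma ccw_offset_inj a : injective (ccw_offset a).
Proof.
move=> z z'; rewrite !ccw_offsetE => eq_off; apply: val_inj => /=.
have := ltn_ord z; have := ltn_ord a; have := ltn_ord z'.
by move: eq_off; case: (leqP a z); case: (leqP a z'); lia.
Qed.

Lemma ccw_offset_eq0 a z : (ccw_offset a z == 0) = (z == a).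
Proof.
have off_aa : ccw_offset a a = 0 by rewrite ccw_offsetE leqnn subnn.
by apply/eqP/eqP => [|->//]; rewrite -off_aa => /ccw_offset_inj.
Qed.

Lemma ccw_offset_pred a k :
  ccw_offset a (ord_pred k) = if k == a then n else (ccw_offset a k).-1.
Proof.
have := ltn_ord a; have := ltn_ord k; rewrite !ccw_offsetE ord_predE.
have -> : (k == a) = (k == a :> nat) by [].
by do ! case: ifP; lia.
Qed.

Lemma ord_pred_invariant_const (V : Type) (f : 'I_n.+1 -> V) :
  (forall k, f (ord_pred k) = f k) -> forall z k, f k = f z.
Proof.
move=> f_pred z k; elim: {k}(ccw_offset z k) {-2}k (erefl (ccw_offset z k)) => [|m IH] k.
  by move/eqP; rewrite ccw_offset_eq0 => /eqP->.
have [->//|kz off_k] := eqVneq k z.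
by rewrite -f_pred; apply: IH; rewrite ccw_offset_pred (negbTE kz) off_k.
Qed.

(* The discrete antiderivative of [x] vanishing at [z]; the sum of the entries
   of [x] vanishing is what makes it consistent when going once around. *)
Definition prefix_sum z (x : 'rV[int]_n.+1) k : int :=
  (\sum_(i | (0 < ccw_offset z i <= ccw_offset z k)%N) x ord0 i)%R.

Lemma prefix_sum_base z x : prefix_sum z x z = 0%R.
Proof.
have /eqP off_zz : ccw_offset z z == 0 by rewrite ccw_offset_eq0.
by rewrite /prefix_sum off_zz big_pred0 // => i; case: ccw_offset.
Qed.

Lemma prefix_sum_pred z x k : in_Lambda x ->
  x ord0 k = (prefix_sum z x k - prefix_sum z x (ord_pred k))%R.
Proof.
move=> /eqP x_sum0; rewrite /prefix_sum ccw_offset_pred.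
have [->|kz] := eqVneq k z.
  have /eqP -> : ccw_offset z z == 0 by rewrite ccw_offset_eq0.
  rewrite big_pred0 => [|i]; last by case: ccw_offset.
  rewrite (eq_bigl (predC1 z)) => [|i]; last first.
    by rewrite /= -ccw_offset_eq0 lt0n -ltnS ccw_offset_lt andbT.
  by move: x_sum0; rewrite (bigD1 z) //= sub0r => /eqP; rewrite addr_eq0 => /eqP.
have off_k : 0 < ccw_offset z k by rewrite lt0n ccw_offset_eq0.
rewrite (bigD1 k) /=; last by rewrite off_k leqnn.
rewrite (eq_bigl (fun i => 0 < ccw_offset z i <= (ccw_offset z k).-1)) ?addrK // => i.
rewrite -(inj_eq (@ccw_offset_inj z)).
move: off_k; case: (ccw_offset z i) => [|a]; case: (ccw_offset z k) => [|b] //= _.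
by rewrite ltnS eqSS ltn_neqAle andbC.
Qed.

End CyclicOrder.

Section Arcs.
Variable n : nat.
Implicit Types (k : 'I_n.+1) (p : 'I_n.+1 * 'I_n.+1).

Lemma arc_set_boundary p k : is_arc p ->
  ((k \in arc_set p) + (k == p.2) = (k == p.1) + (ord_pred k \in arc_set p))%N.
Proof.
move=> arc_p; rewrite !inE ccw_offset_pred.
have -> : (k == p.1) = (ccw_offset p.1 k == 0) by rewrite ccw_offset_eq0.
have -> : (k == p.2) = (ccw_offset p.1 k == ccw_offset p.1 p.2).
  by apply/eqP/eqP => [->|/ccw_offset_inj].
have : ccw_offset p.1 p.2 != 0 by rewrite ccw_offset_eq0 eq_sym.
have := ccw_offset_lt p.1 k; have := ccw_offset_lt p.1 p.2.
case: (ccw_offset p.1 k) => [|o]; case: (ccw_offset p.1 p.2) => [|L] //=.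
  by move=> lt_L _ _; rewrite ltnNge -ltnS lt_L.
by move=> _ _ _; rewrite !ltnS eqSS; case: ltngtP.
Qed.

Lemma arc_set_source p : is_arc p -> p.1 \in arc_set p /\ ord_pred p.1 \notin arc_set p.
Proof.
move=> arc_p; have := arc_set_boundary p.1 arc_p; rewrite eqxx (negbTE arc_p).
by case: (p.1 \in arc_set p); case: (ord_pred p.1 \in arc_set p).
Qed.

Lemma arc_set_sink p : is_arc p -> p.2 \notin arc_set p /\ ord_pred p.2 \in arc_set p.
Proof.
move=> arc_p; have := arc_set_boundary p.2 arc_p; rewrite eqxx eq_sym (negbTE arc_p).
by case: (p.2 \in arc_set p); case: (ord_pred p.2 \in arc_set p).
Qed.

Lemma arc_set_source_uniq p k : is_arc p ->
  k \in arc_set p -> ord_pred k \notin arc_set p -> k = p.1.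
Proof.
move=> arc_p k_p /negbTE pk_p; have := arc_set_boundary k arc_p; rewrite k_p pk_p.
by case: (k =P p.1); case: (k == p.2).
Qed.

Section Admissible.
Variable T : {set 'I_n.+1 * 'I_n.+1}.
Hypothesis admT : admissible T.

Lemma arcT p : p \in T -> is_arc p.
Proof. by move=> pT; case/andP: admT => /forall_inP ->. Qed.

Lemma compatibleT p q : p \in T -> q \in T -> p != q -> compatible_arcs p q.
Proof.
move=> pT qT; case/andP: admT => _ /forall_inP /(_ p pT) /forall_inP /(_ q qT).
exact: implyP.
Qed.

Lemma arc_set_nested p q k : p \in T -> q \in T -> p != q ->
  k \in arc_set p -> k \in arc_set q ->
  (arc_set p \proper arc_set q) \/ (arc_set q \proper arc_set p).
Proof.
move=> pT qT pq k_p k_q; case/orP: (compatibleT pT qT pq) => [/andP [_ /orP]|].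
  by case; [left|right].
case/andP => /andP [+ _] _; rewrite -setI_eq0 => /eqP/setP/(_ k).
by rewrite in_set0 in_setI k_p k_q.
Qed.

(* Take the largest arc [q1] inside [A] through [e0]; an arc [q2] inside [A]
   covering the sink edge of [q1] can neither contain nor lie in [q1], and being
   disjoint from it, it would have to start at that sink: not admissible. *)
Lemma exists_uncovered_edge (A : {set 'I_n.+1}) e0 : e0 \in A ->
  (forall q, q \in T -> arc_set q \proper A -> e0 \in arc_set q -> q.2 \in A) ->
  exists2 k, k \in A & forall q, q \in T -> arc_set q \proper A -> k \notin arc_set q.
Proof.
move=> e0_A sink_A.
pose covered k := [exists q in T, (arc_set q \proper A) && (k \in arc_set q)].
have [k /andP [k_A k_unc]|all_covered] := pickP [pred k | (k \in A) && ~~ covered k].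
  exists k => // q qT qA; apply: contra k_unc => k_q.
  by apply/exists_inP; exists q => //; rewrite qA.
have cover k : k \in A -> exists2 q, q \in T & (arc_set q \proper A) && (k \in arc_set q).
  by move=> k_A; move: (all_covered k); rewrite /= k_A negbK => /exists_inP.
pose S q := [&& q \in T, arc_set q \proper A & e0 \in arc_set q].
have [q0 q0T /andP [q0A e0_q0]] := cover e0 e0_A.
have [q1 /and3P [q1T q1A e0_q1] q1_max] := @arg_maxnP _ q0 S (fun q => #|arc_set q|)
  (introT and3P (And3 q0T q0A e0_q0)).
have [q2 q2T /andP [q2A sink_q2]] := cover _ (sink_A q1 q1T q1A e0_q1).
have [sink_q1 pred_sink_q1] := arc_set_sink (arcT q1T).
have q12 : q1 != q2 by apply/eqP => e; move: sink_q1; rewrite {2}e sink_q2.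
case/orP: (compatibleT q1T q2T q12)
  => [/andP [_ /orP [q1q2|q2q1]]|/andP [/andP [disj_q12 sink_src] _]].
- have : S q2 by rewrite /S q2T q2A (subsetP (proper_sub q1q2)).
  by move=> /q1_max /=; rewrite leqNgt (proper_card q1q2).
- by move: sink_q1; rewrite (subsetP (proper_sub q2q1)).
- have pred_sink_q2 : ord_pred q1.2 \notin arc_set q2.
    by rewrite (disjointFr disj_q12 pred_sink_q1).
  move: sink_src; rewrite /sink /source.
  by rewrite (arc_set_source_uniq (arcT q2T) sink_q2 pred_sink_q2) eqxx.
Qed.

Lemma exists_private_edge p : p \in T -> exists2 k, k \in arc_set p &
  forall q, q \in T -> arc_set q \proper arc_set p -> k \notin arc_set q.
Proof.
move=> pT; have [src_p pred_src_p] := arc_set_source (arcT pT).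
apply: (exists_uncovered_edge src_p) => q qT qp src_q.
have q1_p1 : q.1 = p.1.
  apply/esym/(arc_set_source_uniq (arcT qT) src_q).
  by apply: contra pred_src_p; apply: (subsetP (proper_sub qp)).
rewrite inE ltnNge; apply: contra (proper_subn qp) => len_pq.
by apply/subsetP => k; rewrite !inE q1_p1 => /leq_trans; apply.
Qed.

Lemma exists_free_edge : exists z, forall q, q \in T -> z \notin arc_set q.
Proof.
have [z _ z_free] :=
  @exists_uncovered_edge setT ord0 (in_setT _) (fun q _ _ _ => in_setT _).
exists z => q qT; apply: z_free => //; rewrite properT.
by apply: contraTneq (proj1 (arc_set_sink (arcT qT))) => ->; rewrite in_setT.
Qed.

(* Both picks below are total; the [ord0] fallbacks never occur on [T]. *)
Definition private_edge p : 'I_n.+1 := odflt ord0 [pick k in arc_set p |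
  [forall q in T, (arc_set q \proper arc_set p) ==> (k \notin arc_set q)]].

Definition free_edge : 'I_n.+1 := odflt ord0 [pick z | [forall q in T, z \notin arc_set q]].

Lemma private_edgeP p : p \in T -> private_edge p \in arc_set p /\
  forall q, q \in T -> arc_set q \proper arc_set p -> private_edge p \notin arc_set q.
Proof.
move=> pT; rewrite /private_edge; case: pickP => [k /andP [k_p /forall_inP k_priv]|none] /=.
  by split=> // q qT; apply/implyP/k_priv.
have [k k_p k_priv] := exists_private_edge pT; move: (none k); rewrite /= k_p /=.
by move=> /negbT/negP[]; apply/forall_inP => q qT; apply/implyP/k_priv.
Qed.

Lemma free_edgeP q : q \in T -> free_edge \notin arc_set q.
Proof.
rewrite /free_edge; case: pickP => [z /forall_inP|none] /=; first exact.
have [z z_free] := exists_free_edge; move: (none z) => /negbT/negP[].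
exact/forall_inP.
Qed.

Lemma mem_private_edge p q : p \in T -> q \in T ->
  (private_edge p \in arc_set q) = (q == p) || (arc_set p \proper arc_set q).
Proof.
move=> pT qT; have [priv_p priv_min] := private_edgeP pT.
have [->|qp] := eqVneq q p; first by rewrite priv_p.
apply/idP/idP => [priv_q|/proper_sub/subsetP]; last exact.
rewrite eq_sym in qp; have [//|q_in_p] := arc_set_nested pT qT qp priv_p priv_q.
by move: (priv_min q qT q_in_p); rewrite priv_q.
Qed.

Lemma private_edge_inj : {in T &, injective private_edge}.
Proof.
move=> p q pT qT e; apply/eqP; apply: contraT => pq.
have [priv_p _] := private_edgeP pT; have [priv_q _] := private_edgeP qT.
have := mem_private_edge pT qT; rewrite e priv_q eq_sym (negbTE pq) => /esym p_in_q.
have := mem_private_edge qT pT; rewrite -e priv_p (negbTE pq) => /esym q_in_p.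
by have := ltn_trans (proper_card p_in_q) (proper_card q_in_p); rewrite ltnn.
Qed.

Lemma private_edge_image : #|T| = n -> private_edge @: T = [set~ free_edge].
Proof.
move=> card_T; apply/eqP.
rewrite eqEcard cardsC1 card_ord (card_in_imset private_edge_inj) card_T leqnn andbT.
apply/subsetP => _ /imsetP [p pT ->]; rewrite !inE.
by apply: contraTneq (proj1 (private_edgeP pT)) => ->; exact: free_edgeP.
Qed.

Definition edge_weight (c : 'I_n.+1 * 'I_n.+1 -> int) k : int :=
  (\sum_(q in T | k \in arc_set q) c q)%R.

Lemma coord_arc_combination c k :
  ((\sum_(p in T) c p *: arc_vec p) ord0 k = edge_weight c k - edge_weight c (ord_pred k))%R.
Proof.
rewrite summxE /edge_weight !big_mkcondr -sumrB; apply: eq_bigr => p pT.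
rewrite /arc_vec /e_vec !mxE eqxx /=.
have := arc_set_boundary k (arcT pT).
case: (k \in arc_set p); case: (ord_pred k \in arc_set p);
  case: (k == p.1); case: (k == p.2) => //= _;
  by rewrite ?(mulr0, mulr1, subr0, sub0r, subrr, mulrN).
Qed.

Lemma edge_weight_free c : edge_weight c free_edge = 0%R.
Proof. by rewrite /edge_weight big1 // => q /andP [/free_edgeP/negbTE->]. Qed.

Lemma edge_weight_private c p : p \in T ->
  edge_weight c (private_edge p) = (c p + \sum_(q in T | arc_set p \proper arc_set q) c q)%R.
Proof.
move=> pT; rewrite /edge_weight (bigD1 p) /=; last by rewrite pT (mem_private_edge pT pT) eqxx.
congr (_ + _)%R; apply: eq_bigl => q; case qT: (q \in T) => //=.
by rewrite (mem_private_edge pT qT); case: eqVneq => [->|]; rewrite ?properxx ?andbT.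
Qed.

Lemma arc_combination_eq0 c : (\sum_(p in T) c p *: arc_vec p = 0)%R ->
  forall p, p \in T -> c p = 0%R.
Proof.
move=> comb0.
have weight0 k : edge_weight c k = 0%R.
  rewrite -(edge_weight_free c); apply: ord_pred_invariant_const => {}k.
  by apply/eqP; rewrite eq_sym -subr_eq0 -coord_arc_combination comb0 mxE.
suff c0 h p : p \in T -> #|~: arc_set p| < h -> c p = 0%R.
  by move=> p pT; apply: (c0 #|'I_n.+1|.+1) => //; rewrite ltnS max_card.
elim: h p => [//|h IH] p pT; rewrite ltnS => hp.
have := edge_weight_private c pT; rewrite weight0 big1 ?addr0 => [<-//|q /andP [qT pq]].
exact: IH qT (leq_trans (cardsC_proper pq) hp).
Qed.

(* Back substitution for the unitriangular system
   [edge_weight c (private_edge p) = d (private_edge p)], [p \in T], going down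
   from the largest arcs; the fuel [h] only has to exceed [#|~: arc_set p|]. *)
Fixpoint arc_coeffs_iter (d : 'I_n.+1 -> int) h p : int :=
  if h is h'.+1 then
    (d (private_edge p) - \sum_(q in T | arc_set p \proper arc_set q) arc_coeffs_iter d h' q)%R
  else 0%R.

Definition arc_coeffs d p := arc_coeffs_iter d #|'I_n.+1|.+1 p.

Lemma arc_coeffs_iter_stable d h p :
  #|~: arc_set p| < h -> arc_coeffs_iter d h.+1 p = arc_coeffs_iter d h p.
Proof.
elim: h p => [//|h IH] p; rewrite ltnS => hp /=.
congr (_ - _)%R; apply: eq_bigr => q /andP [_ pq].
exact: IH (leq_trans (cardsC_proper pq) hp).
Qed.

Lemma arc_coeffsE d p : arc_coeffs d p =
  (d (private_edge p) - \sum_(q in T | arc_set p \proper arc_set q) arc_coeffs d q)%R.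
Proof.
congr (_ - _)%R; apply: eq_bigr => q /andP [_ pq]; apply/esym/arc_coeffs_iter_stable.
by apply: leq_trans (cardsC_proper pq) _; rewrite max_card.
Qed.

Lemma edge_weight_arc_coeffs d p : p \in T ->
  edge_weight (arc_coeffs d) (private_edge p) = d (private_edge p).
Proof. by move=> pT; rewrite edge_weight_private // {1}arc_coeffsE subrK. Qed.

Lemma arc_combination_surj : #|T| = n -> forall x, in_Lambda x ->
  exists c, x = (\sum_(p in T) c p *: arc_vec p)%R.
Proof.
move=> card_T x x0; pose d := prefix_sum free_edge x.
have weight k : edge_weight (arc_coeffs d) k = d k.
  have [->|] := eqVneq k free_edge; first by rewrite edge_weight_free /d prefix_sum_base.
  rewrite -in_setC1 -(private_edge_image card_T) => /imsetP [p pT ->].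
  exact: edge_weight_arc_coeffs.
exists (arc_coeffs d); apply/rowP => k.
by rewrite coord_arc_combination !weight /d -prefix_sum_pred.
Qed.

End Admissible.
End Arcs.

Theorem mainTheorem14 (n : nat) (T : {set 'I_n * 'I_n}) :
  3 <= n -> admissible T -> #|T| = n.-1 ->
  is_Z_basis_of_Lambda T (@arc_vec n).
Proof.
case: n T => [//|n] T _ admT card_T; split.
- by move=> p _; exact: in_Lambda_arc_vec.
- exact: arc_combination_eq0.
- exact: arc_combination_surj.
Qed.
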